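(* For every odd $N\ge3$ we have ${}'\mathcal X^-_{N-2}={}^\sharp\mathcal X^-_{N-2}$.
   Context: For an odd integer $M\ge3$ the following objects are defined (we write $[i,j]=\{h\in\mathbb Z:i\le h\le j\}$, empty if $i>j$). A $2$-element subset $\{i,j\}\subseteq[1,M]$ is written $ij$ when either ($i<j$ and $j-i$ odd) or ($i>j$ and $i-j$ even); each $2$-element subset has exactly one such writing. Let $\mathcal P_M$ be the set of all finite sets $B$ of pairwise disjoint $2$-element subsets of $[1,M]$; for $B\in\mathcal P_M$ let $B^0=\{\{i,j\}\in B: i-j\text{ even}\}$, $B^1=\{\{i,j\}\in B: i-j\text{ odd}\}$. A set $X\subseteq[1,M]$ is $0$-covered by $B^1$ if there are $a_1b_1,\dots,a_sb_s\in B^1$ ($s\ge0$, so $a_r<b_r$) with $X=[a_1,b_1]\sqcup\dots\sqcup[a_s,b_s]$ (disjoint union). Let ${}^*\mathcal P_M$ be the set of $B\in\mathcal P_M$ such that: for every $ij\in B^1$, $[i+1,j-1]$ is $0$-covered by $B^1$; and there is a sequence $(i_1,\dots,i_{2s})$ in $[1,M]$ with $B^0=\{i_{2s}i_1,i_{2s-1}i_2,\dots,i_{s+1}i_s\}$ ($s=|B^0|$; unique) such that, if $s\ge1$, each of $[i_1+1,i_2-1],\dots,[i_{s-1}+1,i_s-1],[i_{s+1}+1,i_{s+2}-1],\dots,[i_{2s-1}+1,i_{2s}-1]$ is $0$-covered by $B^1$. Let $\mathcal X^-_{M-2}$ be the set of $B\in{}^*\mathcal P_M$ such that: either $s=0$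 or both $[1,i_1-1]$ and $[i_{2s}+1,M]$ are $0$-covered by $B^1$; and if $s$ is even then $\{i,M\}\in B$ for some even $i$, if $s$ is odd then $\{i,M\}\in B$ for some odd $i$. Let ${}'\mathcal X^-_{M-2}$ be the set of $B\in\mathcal X^-_{M-2}$ with $|B^0|$ even (equivalently, $\{i,M\}\in B$ for some even $i$). For odd $M\ge5$ and $k\in[1,M-1]$ let $\iota_k:[1,M-2]\to[1,M]$ be $\iota_k(i)=i$ for $i<k$ and $\iota_k(i)=i+2$ for $i\ge k$, and let $I_k:\mathcal P_{M-2}\to\mathcal P_M$ send $B$ to $\{\{\iota_k(a),\iota_k(b)\}:\{a,b\}\in B\}\cup\{\{k,k+1\}\}$. Let ${}'Pr^-_{M-2}\subseteq\mathcal P_M$ consist of $\{\{M-1,M\}\}$ and of the sets $\{\{M-1,M\},\{M-2,1\},\{M-3,2\},\dots,\{M-1-\tau,\tau\}\}$ for even $\tau\in[2,(M-3)/2]$. Define ${}^\sharp\mathcal X^-_{M-2}\subseteq\mathcal P_M$ recursively: ${}^\sharp\mathcal X^-_1=\{\{\{2,3\}\}\}\subseteq\mathcal P_3$; for $M\ge5$, $B\in\mathcal P_M$ lies in ${}^\sharp\mathcal X^-_{M-2}$ iff either $B\in{}'Pr^-_{M-2}$ or $B=I_k(B')$ for some $B'\in{}^\sharp\mathcal X^-_{M-4}$ and $k\in[1,M-2]$. *)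

From HB Require Import structures.
From mathcomp Require Import all_boot finmap.
Set Implicit Arguments.
Unset Strict Implicit.
Unset Printing Implicit Defensive.
Local Open Scope fset_scope.
Local Open Scope nat_scope.

(* A candidate B is a finite set of finite sets of naturals; {fset _}
   equality is Leibniz (extensional), so set equalities below are genuine. *)
Notation pairing := {fset {fset nat}}.

Definition isP (M : nat) (B : pairing) : Prop :=
  (forall e, e \in B -> #|` e| = 2 /\ (forall x, x \in e -> 1 <= x <= M)) /\
  (forall e f, e \in B -> f \in B -> e != f -> (e `&` f)%fset = fset0).

(* "ij in B^1": {i,j} in B written ij with i<j, j-i odd. *)
Definition wr1 (B : pairing) (i j : nat) : Prop :=
  [fset i; j] \in B /\ i < j /\ odd (j - i).

Definition evenpair (e : {fset nat}) : bool :=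
  all (fun x => all (fun y => ~~ odd (x + y)) e) e.
Definition B0 (B : pairing) : pairing := [fset e in B | evenpair e]%fset.

Definition inI (p : nat * nat) (h : nat) : bool := (p.1 <= h) && (h <= p.2).
Definition zcov (B : pairing) (lo hi : nat) : Prop :=
  exists S : seq (nat * nat),
    (forall p, p \in S -> wr1 B p.1 p.2) /\
    (forall r r', r < size S -> r' < size S -> r <> r' ->
       forall h, ~ (inI (nth (0,0) S r) h /\ inI (nth (0,0) S r') h)) /\
    (forall h, (lo <= h <= hi) <-> exists2 p, p \in S & inI p h).

(* The sequence (i_1,...,i_2s) (0-indexed here: ix`_0 ... ix`_(2s-1)) with
   B^0 = {i_2s i_1, ..., i_{s+1} i_s} and the 0-covering conditions of *P_M. *)
Definition seqcond (M : nat) (B : pairing) (ix : seq nat) : Prop :=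
  let s := #|` B0 B| in
  let i := fun r => nth 0 ix r in
  size ix = s.*2 /\
  (forall r, r < s.*2 -> 1 <= i r <= M) /\
  B0 B = [fset [fset i (s.*2 - 1 - r); i r] | r in iota 0 s] /\
  (forall r, r < s -> i r < i (s.*2 - 1 - r)) /\
  (forall r, r.+1 < s -> zcov B (i r).+1 (i r.+1).-1) /\
  (forall r, s <= r -> r.+1 < s.*2 -> zcov B (i r).+1 (i r.+1).-1).

Definition Xminus (M : nat) (B : pairing) : Prop :=
  isP M B /\
  (forall i j, wr1 B i j -> zcov B i.+1 j.-1) /\
  exists ix : seq nat, seqcond M B ix /\
    let s := #|` B0 B| in
    (s = 0 \/ (zcov B 1 (nth 0 ix 0).-1 /\ zcov B (nth 0 ix (s.*2 - 1)).+1 M)) /\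
    (if odd s then exists i, odd i /\ [fset i; M] \in B
              else exists i, ~~ odd i /\ [fset i; M] \in B).

Definition primeX (M : nat) (B : pairing) : Prop :=
  Xminus M B /\ ~~ odd #|` B0 B|.

Definition iotak (k i : nat) : nat := if i < k then i else i.+2.
Definition Ik (k : nat) (B : pairing) : pairing :=
  ([fset [fset iotak k x | x : nat in e] | e : {fset nat} in B] `|` [fset [fset k; k.+1]])%fset.

Definition PrSet (M tau : nat) : pairing :=
  ([fset [fset M.-1; M]] `|` [fset [fset M.-1 - r; r] | r in iota 1 tau])%fset.
Definition primePr (M : nat) (B : pairing) : Prop :=
  B = [fset [fset M.-1; M]] \/
  exists tau, ~~ odd tau /\ 2 <= tau <= (M - 3)./2 /\ B = PrSet M tau.

(* #X^-_{M-2} for M = 2n+3, by recursion on n. *)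
Fixpoint sharpR (n : nat) (B : pairing) : Prop :=
  match n with
  | 0 => B = [fset [fset 2; 3]]
  | n'.+1 =>
      let M := n'.*2 + 5 in
      primePr M B \/
      exists k (B' : pairing), 1 <= k <= M - 2 /\ sharpR n' B' /\ B = Ik k B'
  end.
Definition sharpX (M : nat) (B : pairing) : Prop := sharpR (M - 3)./2 B.

From mathcomp Require Import all_boot finmap zify.
Set Implicit Arguments.
Unset Strict Implicit.
Unset Printing Implicit Defensive.
Local Open Scope fset_scope.
Local Open Scope nat_scope.

(* Both sets obey the same recursion.  Let I_k insert the adjacent arc {k, k+1}.  A 0-covering
   of an interval is the same thing as a tiling of it from left to right by arcs of B^1, and I_k
   maps the tilings of B bijectively onto those of I_k B; hence I_k B lies in 'X^-_{M-2} exactly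
   when B lies in 'X^-_{M-4}.  Conversely, an element of 'X^-_{M-2} containing an arc {k, k+1} with
   k + 1 < M is some I_k B'.  If it contains none, then B^1 = {{M-1, M}}, because the innermost arc
   nested in any arc is adjacent; the gaps between consecutive i_r must then be empty, which
   forces i_r = r and i_{2s+1-r} = M-1-r, i.e. B lies in 'Pr^-. *)

(* Innermost conditions first, so that the case hypotheses are free of [if]. *)
Ltac case_ifs :=
  repeat match goal with
  | |- context [if ?c then _ else _] =>
      lazymatch c with
      | context [if _ then _ else _] => fail
      | _ => case: (boolP c) => ?
      end
  end; try lia.

Lemma imfset_inj (T U : choiceType) (f : T -> U) :
  injective f -> injective (fun A : {fset T} => f @` A).
Proof.
move=> f_inj A A' E; apply/fsetP => x.
by rewrite -(mem_imfset imfset_key _ f_inj) /= E (mem_imfset imfset_key _ f_inj).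
Qed.

Lemma fsetI_eq0 (T : choiceType) (e f : {fset T}) : e `&` f = fset0 <-> [disjoint e & f].
Proof. by split=> /eqP. Qed.

Lemma card_imfset_iota (T : choiceType) (f : nat -> T) a n :
  #|` [fset f r | r in iota a n]| = n <-> {in iota a n &, injective f}.
Proof.
pose A := [fset r | r in iota a n].
have cardA : #|` A| = n by rewrite card_fseq undup_id ?iota_uniq ?size_iota.
have memA r : (r \in A) = (r \in iota a n) by rewrite inE.
have -> : [fset f r | r in iota a n] = f @` A by apply: eq_imfset => // r; rewrite /= memA.
rewrite -{1}cardA; split=> [/eqP /card_in_imfsetP f_inj r r' | f_inj].
  by rewrite -!memA; apply: f_inj.
by apply/eqP/card_in_imfsetP => r r'; rewrite !memA; apply: f_inj.
Qed.

Lemma count_from_one (f : nat -> nat) n :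
  f 0 = 1 -> (forall r, r.+1 < n -> f r.+1 <= (f r).+1) ->
  (forall r r', r < n -> r' < n -> f r = f r' -> r = r') -> (forall r, r < n -> 0 < f r) ->
  forall r, r < n -> f r = r.+1.
Proof.
move=> f0 step f_inj f_pos; elim/ltn_ind => -[// | r] IH rn.
have fr := IH r (ltnSn r) (ltnW rn).
have := step r rn; rewrite fr => le_fr.
apply/eqP; rewrite eqn_leq le_fr /= leqNgt; apply/negP => lt_fr.
have fq : f (f r.+1).-1 = f r.+1.
  by rewrite IH; have := f_pos _ rn; lia.
by have := f_inj (f r.+1).-1 r.+1 ltac:(lia) rn fq; have := f_pos _ rn; lia.
Qed.

(** * Zero-coverings as tilings *)

Lemma wr1_lt B i j : wr1 B i j -> i < j.
Proof. by case=> _ []. Qed.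

(* [tiled B a b]: the open interval (a, b) is tiled from left to right by arcs of B^1. *)
Inductive tiled (B : pairing) : nat -> nat -> Prop :=
| tiled_nil a b : b <= a.+1 -> tiled B a b
| tiled_arc a c b : wr1 B a.+1 c -> c < b -> tiled B c b -> tiled B a b.

Lemma tiled_zcov B a b : tiled B a b -> zcov B a.+1 b.-1.
Proof.
elim=> {a b} [a b ba | a c b w cb _ [S [SB [Sdisj Scov]]]].
  by exists [::]; split=> //; split=> // h; split; [lia | case].
have ac := wr1_lt w.
have Sright q h : q \in S -> inI q h -> c < h < b.
  by move=> qS qh; have := proj2 (Scov h) (ex_intro2 _ _ q qS qh); lia.
exists ((a.+1, c) :: S); split.
  by move=> p; rewrite inE => /predU1P [-> | /SB].
split.
  move=> [|r] [|r'] //= rS r'S rr' h [hp hq].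
  - by move: hp (Sright _ h (mem_nth _ r'S) hq); rewrite /inI /=; lia.
  - by move: hq (Sright _ h (mem_nth _ rS) hp); rewrite /inI /=; lia.
  - exact: (Sdisj r r' rS r'S (fun e => rr' (congr1 succn e)) h).
move=> h; split=> [hab | [q]].
  have [hc | ch] := leqP h c; first by exists (a.+1, c); rewrite ?mem_head // /inI /=; lia.
  have [q qS qh] : exists2 q, q \in S & inI q h by apply/Scov; lia.
  by exists q => //; rewrite inE qS orbT.
rewrite inE => /predU1P [-> | qS qh]; first by rewrite /inI /=; lia.
by move: (Sright _ _ qS qh); lia.
Qed.

Lemma zcov_tiled B a b : zcov B a.+1 b.-1 <-> tiled B a b.
Proof.
split; last exact: tiled_zcov.
case=> S [SB [Sdisj Scov]].
have Sin q h : q \in S -> inI q h -> a < h < b.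
  by move=> qS qh; have := proj2 (Scov h) (ex_intro2 _ _ q qS qh); lia.
have Sends q : q \in S -> a < q.1 /\ q.1 <= q.2 < b.
  move=> qS; have := wr1_lt (SB q qS).
  by have := Sin q q.1 qS; have := Sin q q.2 qS; rewrite /inI /=; lia.
have Suniq p q h : p \in S -> q \in S -> inI p h -> inI q h -> p = q.
  case/(nthP (0, 0)) => r rS <-; case/(nthP (0, 0)) => r' r'S <- hp hq.
  by have [-> // | /eqP ne] := eqVneq r r'; case: (Sdisj r r' rS r'S ne h).
(* Every position reached is [a] or the right end of an arc of [S]; the arc of [S] covering
   the next point has to start there. *)
suff tile d x : d = b - x -> (x = a \/ exists2 q, q \in S & q.2 = x) -> tiled B x b.
  exact: (tile _ a erefl (or_introl erefl)).
elim/ltn_ind: d x => d IH x ed hx.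
have [bx | xb] := leqP b x.+1; first exact: tiled_nil.
have xa : a <= x by case: hx => [-> // | [q /Sends qS <-]]; lia.
have [[p1 p2] pS /andP [/= p1x xp2]] : exists2 p, p \in S & inI p x.+1.
  by apply/Scov; lia.
have /= p_ends := Sends _ pS.
have ep1 : p1 = x.+1.
  case: hx => [ex | [[q1 q2] qS /= qx]]; first lia.
  have /= q_ends := Sends _ qS.
  apply/eqP; rewrite eqn_leq p1x leqNgt; apply/negP => p1lex.
  have [_ eq2] : (p1, p2) = (q1, q2) by apply: (Suniq _ _ x) => //; rewrite /inI /=; lia.
  lia.
apply: (@tiled_arc _ _ p2); [by rewrite -ep1; exact: (SB _ pS) | lia |].
by apply: (IH (b - p2)); [lia | lia | right; exists (p1, p2)].
Qed.

Lemma tiled_cases B a b :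
  tiled B a b -> b <= a.+1 \/ exists c, [/\ wr1 B a.+1 c, c < b & tiled B c b].
Proof. by case=> [? ? | ? c ? ? ? ?]; [left | right; exists c]. Qed.

Lemma zcov_nil B a b : b <= a.+1 -> zcov B a.+1 b.-1.
Proof. by move=> ba; apply/zcov_tiled/tiled_nil. Qed.

(** * Inserting an adjacent arc *)

Definition iotak_inv (k y : nat) : nat := if y < k then y else y - 2.

Lemma iotakK k : cancel (iotak k) (iotak_inv k).
Proof. by move=> x; rewrite /iotak_inv /iotak; case_ifs. Qed.

Lemma iotak_invK k y : y != k -> y != k.+1 -> iotak k (iotak_inv k y) = y.
Proof. by rewrite /iotak_inv /iotak => ? ?; case_ifs. Qed.

Lemma iotak_inj k : injective (iotak k).
Proof. exact: can_inj (iotakK k). Qed.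

Lemma ltn_iotak k : {mono iotak k : a b / a < b}.
Proof. by move=> a b; rewrite /iotak; case_ifs. Qed.

Lemma leq_iotak k : {mono iotak k : a b / a <= b}.
Proof. by move=> a b; rewrite /iotak; case_ifs. Qed.

Lemma odd_iotak k x : odd (iotak k x) = odd x.
Proof. by rewrite /iotak; case: ifP => //= _; rewrite negbK. Qed.

Lemma iotak_neq k x : (iotak k x != k) && (iotak k x != k.+1).
Proof. by rewrite /iotak; case_ifs. Qed.

Definition iotak_fset k (e : {fset nat}) : {fset nat} := [fset iotak k x | x : nat in e].

Lemma in_iotak_fset k e y :
  (y \in iotak_fset k e) = [&& y != k, y != k.+1 & iotak_inv k y \in e].
Proof.
apply/imfsetP/and3P => [[x xe ->] | [yk yk1 ye]].
  by rewrite iotakK; case/andP: (iotak_neq k x).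
by exists (iotak_inv k y); rewrite ?iotak_invK.
Qed.

Lemma mem_iotak_fset k e x : (iotak k x \in iotak_fset k e) = (x \in e).
Proof. exact: (mem_imfset _ _ (@iotak_inj k)). Qed.

Lemma iotak_fset_inj k : injective (iotak_fset k).
Proof. by move=> e1 e2 E; apply/fsetP => x; rewrite -(mem_iotak_fset k e1) E mem_iotak_fset. Qed.

Lemma iotak_fset2 k a b : iotak_fset k [fset a; b] = [fset iotak k a; iotak k b].
Proof. exact: imfset_fset2. Qed.

Lemma in_Ik k B e :
  (e \in Ik k B) = (e == [fset k; k.+1]) || (e \in [fset iotak_fset k e | e in B]).
Proof. by rewrite /Ik in_fsetU in_fset1 orbC. Qed.

Lemma Ik_adj k B : [fset k; k.+1] \in Ik k B.
Proof. by rewrite in_Ik eqxx. Qed.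

Lemma mem_Ik k B e : (iotak_fset k e \in Ik k B) = (e \in B).
Proof.
have new : iotak_fset k e != [fset k; k.+1].
  by apply/eqP => E; move: (fset21 k k.+1); rewrite -E in_iotak_fset eqxx.
by rewrite in_Ik (negbTE new) (mem_imfset _ _ (@iotak_fset_inj k)).
Qed.

Lemma wr1_Ik_adj k B : wr1 (Ik k B) k k.+1.
Proof. by split; [exact: Ik_adj | rewrite subSnn]. Qed.

Lemma wr1_Ik k B a b : wr1 (Ik k B) (iotak k a) (iotak k b) <-> wr1 B a b.
Proof.
rewrite /wr1 -iotak_fset2 mem_Ik ltn_iotak.
have odd_diff : a < b -> odd (iotak k b - iotak k a) = odd (b - a).
  by move=> /ltnW ab; rewrite !oddB ?odd_iotak ?leq_iotak.
by split=> -[? [ab ?]]; do 2!split=> //; rewrite ?odd_diff // -odd_diff.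
Qed.

Lemma wr1_Ik_inv k B x y : wr1 (Ik k B) x y ->
  (x = k /\ y = k.+1) \/ exists a b, [/\ x = iotak k a, y = iotak k b & wr1 B a b].
Proof.
move=> w; have [xyB [xy _]] := w.
have xin := fset21 x y; have yin := fset22 x y.
move: xyB; rewrite in_Ik => /orP [/eqP E | /imfsetP [e eB E]].
  by left; move: xin yin; rewrite E !in_fset2; lia.
move: xin yin; rewrite E !in_iotak_fset => /and3P [xk xk1 _] /and3P [yk yk1 _].
right; exists (iotak_inv k x), (iotak_inv k y); rewrite !iotak_invK //; split=> //.
by apply/(wr1_Ik k); rewrite !iotak_invK.
Qed.

Lemma tiled_Ik_image k B a b : tiled B a b -> tiled (Ik k B) (iotak k a) (iotak k b).
Proof.
elim=> {a b} [a b ba | a c b w cb _ IH].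
  case: (boolP ((k == a.+1) && (b == a.+1))) => [/andP [/eqP ka /eqP bk] | hk].
    rewrite /iotak ka bk ltnSn ltnn.
    exact: (tiled_arc (wr1_Ik_adj _ _) _ (tiled_nil _ _)).
  by apply: tiled_nil; move: hk ba; rewrite /iotak; case_ifs.
have ac := wr1_lt w.
have w' := proj2 (wr1_Ik k B _ _) w.
have cb' : iotak k c < iotak k b by rewrite ltn_iotak.
have [ka | nka] := eqVneq k a.+1.
  have ia : iotak k a = a by rewrite /iotak ka ltnSn.
  have ia1 : iotak k a.+1 = a.+3 by rewrite /iotak ka ltnn.
  rewrite ia1 in w'; rewrite ia.
  apply: (@tiled_arc _ _ a.+2); [by rewrite ka; exact: wr1_Ik_adj | | exact: tiled_arc w' cb' IH].
  by move: cb'; rewrite /iotak; case_ifs.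
have ia1 : iotak k a.+1 = (iotak k a).+1 by rewrite /iotak; case_ifs.
by apply: (tiled_arc _ cb' IH); rewrite -ia1.
Qed.

(* [k.+1], the right end of the inserted arc, is the one position not of the form [iotak k _]. *)
Lemma tiled_Ik_preimage k B x y : tiled (Ik k B) x y -> forall b, y = iotak k b ->
  (forall a, x = iotak k a -> tiled B a b) /\ (forall a, x = k.+1 -> k = a.+1 -> tiled B a b).
Proof.
elim=> {x y} [x y yx | x c y w cy _ IH] b yb.
  by split=> a xa => [| ka]; apply: tiled_nil; move: yx; rewrite yb xa /iotak; case_ifs.
have [IHc _] := IH b yb.
have arc a a1 c1 : a1 = a.+1 -> wr1 B a1 c1 -> c = iotak k c1 -> tiled B a b.
  move=> -> wB ec; apply: (tiled_arc wB); last exact: IHc.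
  by rewrite -(ltn_iotak k) -ec -yb.
split=> a xa => [| ka]; case: (wr1_Ik_inv w) => [[xk ck] | [a1 [c1 [xa1 ec wB]]]].
- by apply: (proj2 (IH b yb) a) => //; move: xk; rewrite xa /iotak; case_ifs.
- by apply: (arc _ a1 c1) => //; move: xa1; rewrite xa /iotak; case_ifs.
- lia.
- by apply: (arc _ a1 c1) => //; move: xa1; rewrite xa /iotak; case_ifs.
Qed.

Lemma tiled_Ik k B a b : tiled (Ik k B) (iotak k a) (iotak k b) <-> tiled B a b.
Proof.
split=> [t | ]; last exact: tiled_Ik_image.
exact: (proj1 (tiled_Ik_preimage t erefl) a erefl).
Qed.

Lemma card_iotak_fset k e : #|` iotak_fset k e| = #|` e|.
Proof. exact: card_imfset (@iotak_inj k). Qed.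

Lemma disjoint_iotak_fset k e f :
  [disjoint iotak_fset k e & iotak_fset k f] = [disjoint e & f].
Proof.
apply/fdisjointP/fdisjointP => H x.
  by rewrite -(mem_iotak_fset k e) -(mem_iotak_fset k f); apply: H.
rewrite in_iotak_fset => /and3P [xk xk1 /H].
by rewrite -(mem_iotak_fset k f) iotak_invK.
Qed.

Lemma disjoint_adj_iotak_fset k e : [disjoint [fset k; k.+1] & iotak_fset k e].
Proof.
by apply/fdisjointP => x; rewrite in_fset2 in_iotak_fset => /orP [] /eqP ->; rewrite eqxx ?andbF.
Qed.

Lemma range_iotak k m x : 1 <= k <= m.+1 -> (1 <= iotak k x <= m.+2) = (1 <= x <= m).
Proof. by move=> km; rewrite /iotak; case_ifs; apply/idP/idP; lia. Qed.

Lemma isP_Ik k m B : 1 <= k <= m.+1 -> isP m.+2 (Ik k B) <-> isP m B.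
Proof.
move=> km; have range := range_iotak _ km.
have pair e : (#|` iotak_fset k e| = 2 /\ forall x, x \in iotak_fset k e -> 1 <= x <= m.+2)
              <-> (#|` e| = 2 /\ forall x, x \in e -> 1 <= x <= m).
  rewrite card_iotak_fset; split=> -[-> r]; split=> // x.
    by rewrite -range -(mem_iotak_fset k); apply: r.
  by rewrite in_iotak_fset => /and3P [xk xk1 /r]; rewrite -range iotak_invK.
split=> [[Bpair Bdisj] | [Bpair Bdisj]]; split.
- by move=> e eB; apply/pair/Bpair; rewrite mem_Ik.
- move=> e f eB fB ef; rewrite fsetI_eq0 -(disjoint_iotak_fset k) -fsetI_eq0.
  by apply: Bdisj; rewrite ?mem_Ik // (inj_eq (@iotak_fset_inj k)).
- move=> e; rewrite in_Ik => /orP [/eqP -> | /imfsetP [e' /= e'B ->]]; last exact/pair/Bpair.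
  by rewrite cardfs2; split=> [| x]; [case: eqVneq; lia | rewrite in_fset2; lia].
- move=> e f; rewrite !in_Ik.
  move=> /orP [/eqP -> | /imfsetP [e' /= e'B ->]] /orP [/eqP -> | /imfsetP [f' /= f'B ->]] ef.
  + by rewrite eqxx in ef.
  + by rewrite fsetI_eq0 disjoint_adj_iotak_fset.
  + by rewrite fsetI_eq0 fdisjoint_sym disjoint_adj_iotak_fset.
  + rewrite fsetI_eq0 disjoint_iotak_fset -fsetI_eq0; apply: Bdisj => //.
    by apply: contraNneq ef => ->.
Qed.

Lemma evenpairP (e : {fset nat}) :
  reflect (forall x y, x \in e -> y \in e -> ~~ odd (x + y)) (evenpair e).
Proof.
apply: (iffP allP) => [H x y /H /allP | H x xe]; first exact.
by apply/allP => y; apply: H.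
Qed.

Lemma evenpair_iotak_fset k e : evenpair (iotak_fset k e) = evenpair e.
Proof.
apply/evenpairP/evenpairP => H x y.
  rewrite -(mem_iotak_fset k e x) -(mem_iotak_fset k e y) => /H /[apply].
  by rewrite oddD !odd_iotak -oddD.
rewrite !in_iotak_fset => /and3P [xk xk1 /H Hx] /and3P [yk yk1 /Hx].
by rewrite oddD -(odd_iotak k (iotak_inv k x)) -(odd_iotak k (iotak_inv k y)) !iotak_invK // -oddD.
Qed.

Lemma evenpair_adj k : evenpair [fset k; k.+1] = false.
Proof. by apply/evenpairP => /(_ k k.+1 (fset21 _ _) (fset22 _ _)); lia. Qed.

Lemma in_B0 B e : (e \in B0 B) = (e \in B) && evenpair e.
Proof. by rewrite /B0 !inE. Qed.

Lemma B0_Ik k B : B0 (Ik k B) = [fset iotak_fset k e | e in B0 B].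
Proof.
apply/fsetP => e; rewrite in_B0 in_Ik; apply/andP/imfsetP => [[] | [e' /=]].
  case/orP => [/eqP -> | /imfsetP [e' /= e'B ->]]; first by rewrite evenpair_adj.
  by rewrite evenpair_iotak_fset => ev; exists e' => //; rewrite in_B0 e'B ev.
rewrite in_B0 => /andP [e'B ev] ->; rewrite evenpair_iotak_fset ev; split=> //.
by apply/orP; right; apply/imfsetP; exists e'.
Qed.

Lemma card_B0_Ik k B : #|` B0 (Ik k B)| = #|` B0 B|.
Proof. by rewrite B0_Ik card_imfset //; apply: iotak_fset_inj. Qed.

(* The pair {i_{2s-a}, i_{a+1}} of B^0, in the 0-indexed notation of [seqcond]. *)
Definition ix_pair (ix : seq nat) (s a : nat) : {fset nat} :=
  [fset nth 0 ix (s.*2 - 1 - a); nth 0 ix a].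

Lemma mem_ix_pair ix s r : r < s.*2 -> nth 0 ix r \in ix_pair ix s (minn r (s.*2 - 1 - r)).
Proof.
move=> rs; rewrite /ix_pair; case: (leqP r (s.*2 - 1 - r)) => h.
  exact: fset22.
by rewrite (_ : s.*2 - 1 - _ = r) ?fset21 //; lia.
Qed.

Lemma ix_pair_B0 M B ix a : seqcond M B ix -> a < #|` B0 B| -> ix_pair ix #|` B0 B| a \in B0 B.
Proof.
move=> [_ [_ [pairs _]]]; set s := #|` B0 B| in pairs * => a_s.
by rewrite pairs; apply/imfsetP; exists a; rewrite ?mem_iota.
Qed.

Lemma seqcond_mem M B ix y : seqcond M B ix -> y \in ix -> exists2 e, e \in B0 B & y \in e.
Proof.
move=> sc /(nthP 0) [r rs <-]; have [sz _] := sc; rewrite sz in rs.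
exists (ix_pair ix #|` B0 B| (minn r (#|` B0 B|.*2 - 1 - r))); last exact: mem_ix_pair.
by apply: ix_pair_B0 sc _; lia.
Qed.

Lemma seqcond_uniq M B ix : isP M B -> seqcond M B ix -> uniq ix.
Proof.
move=> [_ Bdisj] sc; have [sz [_ [pairs [lt _]]]] := sc.
set s := #|` B0 B| in sz pairs lt.
have P_inj : {in iota 0 s &, injective (ix_pair ix s)} by apply/card_imfset_iota; rewrite -pairs.
have PB a : a < s -> ix_pair ix s a \in B by move/(ix_pair_B0 sc); rewrite in_B0 => /andP [].
apply/(uniqP 0) => r r'; rewrite !inE sz => rs r's eq_nth.
set a := minn r (s.*2 - 1 - r); set a' := minn r' (s.*2 - 1 - r').
have [ea | na] := eqVneq a a'.
  apply/eqP; apply: contraT => /eqP nrr'.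
  have er' : r' = s.*2 - 1 - r by move: ea; rewrite /a /a'; lia.
  case: (leqP r (s.*2 - 1 - r)) => h.
    by have := lt r ltac:(lia); rewrite -er' eq_nth ltnn.
  have := lt r' ltac:(lia); rewrite (_ : s.*2 - 1 - r' = r); last lia.
  by rewrite eq_nth ltnn.
have Pne : ix_pair ix s a != ix_pair ix s a'.
  by apply: contra na => /eqP /P_inj -> //; rewrite mem_iota /a /a'; lia.
have := Bdisj _ _ (PB a ltac:(rewrite /a; lia)) (PB a' ltac:(rewrite /a'; lia)) Pne.
move/fsetI_eq0/fdisjointP/(_ _ (mem_ix_pair ix rs)).
by rewrite eq_nth mem_ix_pair.
Qed.

Lemma nth_map_iotak k ix r : 0 < k -> nth 0 (map (iotak k) ix) r = iotak k (nth 0 ix r).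
Proof. by move=> k0; elim: ix r => [|x ix IH] [|r] /=; rewrite ?IH // /iotak k0. Qed.

Lemma zcov_Ik k B a b : zcov (Ik k B) (iotak k a).+1 (iotak k b).-1 <-> zcov B a.+1 b.-1.
Proof. by rewrite !zcov_tiled tiled_Ik. Qed.

Lemma zcov_Ik_head k B b : 0 < k -> zcov (Ik k B) 1 (iotak k b).-1 <-> zcov B 1 b.-1.
Proof. by move=> k0; rewrite -(zcov_Ik k B 0 b) (_ : iotak k 0 = 0) // /iotak k0. Qed.

Lemma zcov_Ik_tail k m B a : k <= m.+1 -> zcov (Ik k B) (iotak k a).+1 m.+2 <-> zcov B a.+1 m.
Proof.
move=> km; have top : iotak k m.+1 = m.+3 by rewrite /iotak ltnNge km.
by have := zcov_Ik k B a m.+1; rewrite top.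
Qed.

Lemma seqcond_Ik k m B ix : 1 <= k <= m.+1 ->
  seqcond m.+2 (Ik k B) (map (iotak k) ix) <-> seqcond m B ix.
Proof.
move=> km; rewrite /seqcond card_B0_Ik size_map B0_Ik.
set s := #|` B0 B|.
have nthE r : nth 0 (map (iotak k) ix) r = iotak k (nth 0 ix r) by apply: nth_map_iotak; lia.
have -> : [fset ix_pair (map (iotak k) ix) s r | r in iota 0 s] =
          [fset iotak_fset k e | e in [fset ix_pair ix s r | r in iota 0 s]].
  by rewrite -imfset_comp; apply: eq_imfset => // r; rewrite /ix_pair /= !nthE iotak_fset2.
split=> -[sz [rng [pairs [lt [gapL gapR]]]]]; split=> //; do 4?split.
- by move=> r /rng; rewrite nthE range_iotak.
- exact: (imfset_inj (@iotak_fset_inj k)).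
- by move=> r /lt; rewrite !nthE ltn_iotak.
- by move=> r /gapL; rewrite !nthE zcov_Ik.
- by move=> r r1 r2; move: (gapR r r1 r2); rewrite !nthE zcov_Ik.
- by move=> r /rng; rewrite nthE range_iotak.
- by rewrite pairs.
- by move=> r /lt; rewrite !nthE ltn_iotak.
- by move=> r /gapL; rewrite !nthE zcov_Ik.
- by move=> r r1 r2; move: (gapR r r1 r2); rewrite !nthE zcov_Ik.
Qed.

Lemma seqcond_Ik_image k M B ix :
  seqcond M (Ik k B) ix -> map (iotak k) (map (iotak_inv k) ix) = ix.
Proof.
move=> sc; rewrite -map_comp; apply: map_id_in => y /(seqcond_mem sc) [e].
rewrite B0_Ik => /imfsetP [e' _ ->]; rewrite in_iotak_fset => /and3P [yk yk1 _].
exact: iotak_invK.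
Qed.

Lemma arcs_Ik k B :
  (forall i j, wr1 (Ik k B) i j -> zcov (Ik k B) i.+1 j.-1) <->
  (forall a b, wr1 B a b -> zcov B a.+1 b.-1).
Proof.
split=> H; first by move=> a b /(wr1_Ik k) /H /zcov_Ik.
move=> i j /wr1_Ik_inv [[-> ->] | [a [b [-> -> /H /zcov_Ik //]]]].
exact: (proj2 (zcov_tiled _ k k.+1) (tiled_nil _ (leqnn _))).
Qed.

Lemma partner_Ik k B j (p : bool -> bool) :
  (exists i, p (odd i) /\ [fset i; iotak k j] \in Ik k B) <->
  (exists i, p (odd i) /\ [fset i; j] \in B).
Proof.
split=> -[i [pi iB]]; last first.
  by exists (iotak k i); rewrite odd_iotak -iotak_fset2 mem_Ik.
move: iB; rewrite in_Ik => /orP [/eqP E | /imfsetP [e eB E]].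
  have := fset22 i (iotak k j); rewrite E in_fset2.
  by case/andP: (iotak_neq k j) => /negPf -> /negPf ->.
have := fset21 i (iotak k j); rewrite E in_iotak_fset => /and3P [ik ik1 _].
exists (iotak_inv k i); rewrite -(odd_iotak k) iotak_invK //; split=> //.
by rewrite -(mem_Ik k) iotak_fset2 iotak_invK // E mem_Ik.
Qed.

Lemma Xminus_Ik k m B : 1 <= k <= m -> Xminus m.+2 (Ik k B) <-> Xminus m B.
Proof.
move=> km; have km1 : 1 <= k <= m.+1 by lia.
rewrite /Xminus isP_Ik // arcs_Ik card_B0_Ik.
set s := #|` B0 B|.
have ends ix :
    (s = 0 \/ zcov (Ik k B) 1 (nth 0 (map (iotak k) ix) 0).-1 /\
              zcov (Ik k B) (nth 0 (map (iotak k) ix) (s.*2 - 1)).+1 m.+2) <->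
    (s = 0 \/ zcov B 1 (nth 0 ix 0).-1 /\ zcov B (nth 0 ix (s.*2 - 1)).+1 m).
  by rewrite !nth_map_iotak ?zcov_Ik_head ?zcov_Ik_tail //; lia.
have parity :
    (if odd s then exists i, odd i /\ [fset i; m.+2] \in Ik k B
     else exists i, ~~ odd i /\ [fset i; m.+2] \in Ik k B) <->
    (if odd s then exists i, odd i /\ [fset i; m] \in B
     else exists i, ~~ odd i /\ [fset i; m] \in B).
  have top : iotak k m = m.+2 by rewrite /iotak; case_ifs.
  by rewrite -top; case: ifP => _; [exact: (partner_Ik k B m id) | exact: (partner_Ik k B m negb)].
split=> -[PB [arcs [ix [sc [bd pa]]]]]; do 2!split=> //.
  have E := seqcond_Ik_image sc; rewrite -E in sc bd.
  exists (map (iotak_inv k) ix); split; first exact/(seqcond_Ik _ _ km1).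
  by split; [exact/ends | exact/parity].
exists (map (iotak k) ix); split; first exact/(seqcond_Ik _ _ km1).
by split; [exact/ends | exact/parity].
Qed.

Lemma primeX_Ik k m B : 1 <= k <= m -> primeX m.+2 (Ik k B) <-> primeX m B.
Proof. by move=> km; rewrite /primeX Xminus_Ik // card_B0_Ik. Qed.

Lemma iotak_fset_inv k e : (forall y, y \in e -> (y != k) && (y != k.+1)) ->
  iotak_fset k [fset iotak_inv k y | y in e] = e.
Proof.
move=> avoid; apply/fsetP => y; rewrite in_iotak_fset.
apply/and3P/idP => [[yk yk1 /imfsetP [z /= ze E]] | ye].
  by case/andP: (avoid z ze) => zk zk1; rewrite -(iotak_invK yk yk1) E iotak_invK.
by case/andP: (avoid y ye) => yk yk1; split=> //; apply/imfsetP; exists y.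
Qed.

Lemma Ik_of_adj M B (k : nat) : isP M B -> [fset k; k.+1] \in B -> exists B', B = Ik k B'.
Proof.
move=> [_ Bdisj] adjB.
have avoid e y : e \in B -> e != [fset k; k.+1] -> y \in e -> (y != k) && (y != k.+1).
  move=> eB ne ye; have /fsetI_eq0/fdisjointP/(_ y ye) := Bdisj _ _ eB adjB ne.
  by rewrite in_fset2 negb_or.
exists [fset [fset iotak_inv k y | y : nat in e] | e : {fset nat} in B `\ [fset k; k.+1]].
apply/fsetP => e; rewrite in_Ik; apply/idP/orP => [eB | ].
  have [-> | ne] := eqVneq e [fset k; k.+1]; [by left | right].
  apply/imfsetP; exists [fset iotak_inv k y | y in e].
    by apply/imfsetP; exists e => //; rewrite in_fsetD1 ne.
  by rewrite iotak_fset_inv // => y; apply: avoid.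
case=> [/eqP -> // | /imfsetP [_ /imfsetP [e' /= /fsetD1P [ne e'B] ->] ->]].
by rewrite iotak_fset_inv // => y; apply: avoid.
Qed.

(** * The sets of 'Pr^- *)

Lemma PrSetP M tau e : reflect
  (e = [fset M.-1; M] \/ exists2 r, 0 < r <= tau & e = [fset M.-1 - r; r])
  (e \in PrSet M tau).
Proof.
rewrite /PrSet in_fsetU in_fset1; apply: (iffP orP) => -[/eqP -> | ]; try by left.
  by case/imfsetP => r /=; rewrite mem_iota => rr ->; right; exists r => //; lia.
by case=> r rr ->; right; apply/imfsetP; exists r; rewrite //= mem_iota; lia.
Qed.

Lemma PrSet0 M : PrSet M 0 = [fset [fset M.-1; M]].
Proof.
by apply/fsetP => e; apply/PrSetP/fset1P => [[-> | [r /andP [r0 r0']]] | ->]; [| lia | left].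
Qed.

Section PrSetIsPrimeX.

Variables (M tau : nat).
Hypotheses (oddM : odd M) (M3 : 3 <= M) (even_tau : ~~ odd tau) (tau_le : tau.*2 <= M - 3).

Let B := PrSet M tau.

Lemma isP_PrSet : isP M B.
Proof.
have pair2 a b : a != b -> #|` [fset a; b]| = 2 by rewrite cardfs2 => ->.
split=> [e /PrSetP [-> | [r rr ->]] | e f /PrSetP [-> | [r rr ->]] /PrSetP [-> | [r' rr' ->]] ef].
- by rewrite pair2; [split=> // x; rewrite in_fset2 | ]; lia.
- by rewrite pair2; [split=> // x; rewrite in_fset2 | ]; lia.
- by rewrite eqxx in ef.
- by rewrite fsetI_eq0; apply/fdisjointP => x; rewrite !in_fset2; lia.
- by rewrite fsetI_eq0; apply/fdisjointP => x; rewrite !in_fset2; lia.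
- have rr'0 : r != r' by apply: contra ef => /eqP ->.
  by rewrite fsetI_eq0; apply/fdisjointP => x; rewrite !in_fset2; lia.
Qed.

Lemma B0_PrSet : B0 B = [fset [fset M.-1 - r; r] | r in iota 1 tau].
Proof.
apply/fsetP => e; rewrite in_B0; apply/andP/imfsetP => [[/PrSetP [-> | [r rr ->]] ev] | [r /=]].
- by move/evenpairP: ev => /(_ _ _ (fset21 M.-1 M) (fset22 M.-1 M)); lia.
- by exists r; rewrite //= mem_iota; lia.
rewrite mem_iota => rr ->; split; first by apply/PrSetP; right; exists r => //; lia.
by apply/evenpairP => x y; rewrite !in_fset2; lia.
Qed.

Lemma card_B0_PrSet : #|` B0 B| = tau.
Proof.
rewrite B0_PrSet; apply/card_imfset_iota => r r'; rewrite !mem_iota => rr r'r E.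
by have := fset22 (M.-1 - r) r; rewrite E in_fset2; lia.
Qed.

Lemma wr1_PrSet i j : wr1 B i j -> i = M.-1 /\ j = M.
Proof.
move=> [/PrSetP [E | [r rr E]] [ij oji]]; have := fset21 i j; have := fset22 i j;
  rewrite E !in_fset2; lia.
Qed.

Let ix := iota 1 tau ++ iota (M.-1 - tau) tau.

Lemma nth_ix r : r < tau.*2 -> nth 0 ix r = if r < tau then r.+1 else M.-1 - tau + (r - tau).
Proof.
move=> rt; rewrite nth_cat size_iota; case: ifP => h; first by rewrite nth_iota // add1n.
by rewrite nth_iota //; lia.
Qed.

Lemma seqcond_PrSet : seqcond M B ix.
Proof.
rewrite /seqcond card_B0_PrSet; split; first by rewrite size_cat !size_iota addnn.
split; first by move=> r rt; rewrite nth_ix //; case_ifs.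
split.
  rewrite B0_PrSet; apply/fsetP => e; apply/imfsetP/imfsetP => -[r /=]; rewrite mem_iota => rr ->.
    exists r.-1; rewrite ?mem_iota; first lia.
    by rewrite !nth_ix; [congr [fset _; _]; case_ifs | lia | lia].
  exists r.+1; rewrite ?mem_iota; first lia.
  by rewrite !nth_ix; [congr [fset _; _]; case_ifs | lia | lia].
split; first by move=> r rt; rewrite !nth_ix; case_ifs.
by split=> [r rt | r r1 r2]; apply: zcov_nil; rewrite !nth_ix; case_ifs.
Qed.

Lemma primeX_PrSet : primeX M B.
Proof.
split; last by rewrite card_B0_PrSet.
split; first exact: isP_PrSet.
split; first by move=> i j /wr1_PrSet [-> ->]; apply: zcov_nil; lia.
exists ix; split; first exact: seqcond_PrSet.
rewrite card_B0_PrSet; split.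
  2: by rewrite (negbTE even_tau); exists M.-1; split; [lia | apply/PrSetP; left].
have [-> | tau0] := eqVneq tau 0; [by left | right].
split; first by rewrite nth_ix; [case_ifs; apply: zcov_nil | lia].
have -> : nth 0 ix (tau.*2 - 1) = M.-2 by rewrite nth_ix; [case_ifs | lia].
apply: (proj2 (zcov_tiled B _ M.+1)); apply: (@tiled_arc _ _ M) => //; last exact: tiled_nil.
by split; [rewrite (_ : M.-2.+1 = M.-1); [apply/PrSetP; left | lia] | lia].
Qed.

End PrSetIsPrimeX.

(** * Elements without an inner adjacent arc *)

Lemma wr1_adj_inside B i j : (forall a b, wr1 B a b -> zcov B a.+1 b.-1) -> wr1 B i j ->
  j = i.+1 \/ exists k, [/\ wr1 B k k.+1, i < k & k.+1 < j].
Proof.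
move=> arcs; move: {2}(j - i) (leqnn (j - i)) => d.
elim: d i j => [|d IH] i j dij w; have ij := wr1_lt w; first lia.
have [-> | nj] := eqVneq j i.+1; [by left | right].
case/tiled_cases: (proj1 (zcov_tiled B i j) (arcs i j w)) => [| [c [w' cj _]]]; first lia.
have := wr1_lt w'; case: (IH i.+1 c _ w') => [| ec | [k [wk ik kc]]]; first lia.
  by move=> _; exists i.+1; rewrite -ec; split=> //; lia.
by move=> _; exists k; split=> //; lia.
Qed.

Section NoAdjacentArc.

Variables (M : nat) (B : pairing).
Hypotheses (oddM : odd M) (BX : primeX M B).
Hypothesis no_adj : forall k, 0 < k -> k.+1 < M -> [fset k; k.+1] \notin B.

Let BP : isP M B := BX.1.1.
Let arcs : forall a b, wr1 B a b -> zcov B a.+1 b.-1 := BX.1.2.1.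

Lemma range_B e x : e \in B -> x \in e -> 1 <= x <= M.
Proof. by move=> eB; apply: (BP.1 e eB).2. Qed.

Lemma arc_top i j : wr1 B i j -> i = M.-1 /\ j = M.
Proof.
move=> w; have [iB [ij _]] := w.
have := range_B iB (fset21 i j); have := range_B iB (fset22 i j).
case: (wr1_adj_inside arcs w) => [ej | [k [[kB _] ik kj]]]; last first.
  by have := range_B kB (fset22 k k.+1); have := @no_adj k; rewrite kB; lia.
by have := @no_adj i; rewrite -ej iB; lia.
Qed.

Lemma tiled_top a b : tiled B a b -> b <= a.+1 \/ (a.+2 = M /\ b = M.+1).
Proof.
case/tiled_cases => [| [c [/arc_top [ea ->] cb /tiled_cases [| [c' [/arc_top [] ] ]]]]].
- by left.
- by right; lia.
- lia.
Qed.

Lemma top_in_B : [fset M.-1; M] \in B.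
Proof.
case: BX => [[_ [_ [ix [_ [_ parity]]]]] even_s]; rewrite (negbTE even_s) in parity.
case: parity => i [even_i iB].
have iM : i < M.
  have := range_B iB (fset21 i M); have [+ _] := BP.1 _ iB.
  by rewrite cardfs2; case: eqVneq => //; lia.
have [<- _] : i = M.-1 /\ M = M by apply: arc_top; split=> //; split=> //; rewrite oddB; lia.
by [].
Qed.

Lemma B_split e : (e \in B) = (e == [fset M.-1; M]) || (e \in B0 B).
Proof.
apply/idP/orP => [eB | [/eqP -> | ]]; [ | exact: top_in_B | by rewrite in_B0 => /andP []].
rewrite in_B0 eB /=; case: (boolP (evenpair e)) => [_ | /allPn [x xe /allPn [y ye]]].
  by right.
rewrite negbK => oxy; left.
have [card2 _] := BP.1 _ eB.
wlog xy : x y xe ye oxy / x < y.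
  move=> wlog_xy; case: (ltngtP x y) => [| yx | exy]; first exact: wlog_xy.
    by apply: (wlog_xy y x) => //; rewrite addnC.
  by move: oxy; rewrite exy addnn odd_double.
have ee : e = [fset x; y].
  apply/eqP; rewrite eq_sym eqEfcard cardfs2 card2 (negbT (ltn_eqF xy)) leqnn andbT.
  by apply/fsubsetP => z; rewrite in_fset2 => /orP [] /eqP ->.
have [ex ey] : x = M.-1 /\ y = M by apply: arc_top; split; [rewrite -ee | split=> //; lia].
by rewrite ee ex ey.
Qed.

Lemma B0_range e x : e \in B0 B -> x \in e -> 1 <= x <= M.-2.
Proof.
move=> eB0 xe; have /andP [eB ev] : (e \in B) && evenpair e by rewrite -in_B0.
have ne : e != [fset M.-1; M].
  apply: contraTneq ev => ->; apply/negP => /evenpairP.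
  by move=> /(_ _ _ (fset21 M.-1 M) (fset22 M.-1 M)); lia.
have /fsetI_eq0/fdisjointP/(_ x xe) := BP.2 _ _ eB top_in_B ne.
by rewrite in_fset2 negb_or; have := range_B eB xe; lia.
Qed.

Lemma seqcond_no_adj ix : seqcond M B ix -> 0 < #|` B0 B| ->
  zcov B 1 (nth 0 ix 0).-1 -> zcov B (nth 0 ix (#|` B0 B|.*2 - 1)).+1 M ->
  forall r, r < #|` B0 B| -> nth 0 ix r = r.+1 /\ nth 0 ix (#|` B0 B|.*2 - 1 - r) = M.-2 - r.
Proof.
move=> sc s_gt0 first_gap last_gap; have [sz [_ [_ [_ [gapL gapR]]]]] := sc.
set s := #|` B0 B| in s_gt0 sz gapL gapR first_gap last_gap *.
set i := nth 0 ix in gapL gapR first_gap last_gap *.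
have i_range r : r < s.*2 -> 1 <= i r <= M.-2.
  rewrite -sz => /(mem_nth 0) /(seqcond_mem sc) [e eB0]; exact: B0_range.
have i_inj r r' : r < s.*2 -> r' < s.*2 -> i r = i r' -> r = r'.
  by rewrite -sz => rs r's; apply/(uniqP 0 (seqcond_uniq BP sc)).
have step r r' : zcov B (i r).+1 (i r').-1 -> r' < s.*2 -> i r' <= (i r).+1.
  by move=> /zcov_tiled /tiled_top + /i_range; lia.
have i_first : i 0 = 1 by move: first_gap => /zcov_tiled /tiled_top; have := i_range 0; lia.
have i_last : i (s.*2 - 1) = M.-2.
  by move: last_gap => /(zcov_tiled B _ M.+1) /tiled_top; have := i_range (s.*2 - 1); lia.
move=> r rs; split.
  apply: (count_from_one (f := i) (n := s)) => // [q qs | q q' qs q's | q qs].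
  - by apply: step; [exact: gapL | lia].
  - by apply: i_inj; lia.
  - by have := i_range q; lia.
(* The upper half, read backwards and reflected, counts up from one as well. *)
pose j q := M.-1 - i (s.*2 - 1 - q).
have j_first : j 0 = 1 by rewrite /j subn0 i_last; have := i_range 0; lia.
have j_step q : q.+1 < s -> j q.+1 <= (j q).+1.
  move=> qs; have := gapR (s.*2 - 1 - q.+1) ltac:(lia) ltac:(lia).
  rewrite (_ : (s.*2 - 1 - q.+1).+1 = s.*2 - 1 - q); last lia.
  move=> /step /(_ ltac:(lia)).
  by rewrite /j; have := i_range (s.*2 - 1 - q); have := i_range (s.*2 - 1 - q.+1); lia.
have j_inj q q' : q < s -> q' < s -> j q = j q' -> q = q'.
  move=> qs q's; rewrite /j; have := i_range (s.*2 - 1 - q); have := i_range (s.*2 - 1 - q').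
  by have := i_inj (s.*2 - 1 - q) (s.*2 - 1 - q'); lia.
have j_pos q : q < s -> 0 < j q by rewrite /j; have := i_range (s.*2 - 1 - q); lia.
have := count_from_one j_first j_step j_inj j_pos rs.
by rewrite /j; have := i_range (s.*2 - 1 - r); lia.
Qed.

Lemma primePr_of_no_adj : primePr M B.
Proof.
case: BX => [[_ [_ [ix [sc [ends _]]]]] even_s].
have [_ [_ [pairs [lt _]]]] := sc.
move: sc ends even_s pairs lt; set s := #|` B0 B| => sc ends even_s pairs lt.
have [s0 | s_gt0] := posnP s.
  by left; apply/fsetP => e; rewrite B_split in_fset1 (cardfs0_eq s0) in_fset0 orbF.
case: ends => [s0 | [first_gap last_gap]]; first by rewrite s0 in s_gt0.
have vals := seqcond_no_adj sc s_gt0 first_gap last_gap.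
right; exists s; split=> //; split.
  by have := lt s.-1 ltac:(lia); have [-> ->] := vals s.-1 ltac:(lia); lia.
have pairE a : a < s -> ix_pair ix s a = [fset M.-1 - a.+1; a.+1].
  move=> a_s; have [lo hi] := vals a a_s.
  by rewrite /ix_pair lo hi (_ : M.-2 - a = M.-1 - a.+1) //; lia.
apply/fsetP => e; rewrite B_split; apply/orP/PrSetP => [[/eqP -> | ] | [-> | [r rr ->]]].
- by left.
- rewrite pairs => /imfsetP [a /=]; rewrite mem_iota => a_s ->.
  by right; exists a.+1; [lia | exact: pairE].
- by left.
- right; rewrite pairs; apply/imfsetP; exists r.-1; rewrite ?mem_iota; first lia.
  by have := pairE r.-1 ltac:(lia); rewrite prednK; [move=> <- | lia].
Qed.

End NoAdjacentArc.

Lemma primePr_primeX M B : odd M -> 3 <= M -> primePr M B -> primeX M B.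
Proof.
move=> oddM M3 [-> | [tau [even_tau [tau_bd ->]]]]; first by rewrite -PrSet0; apply: primeX_PrSet.
by apply: primeX_PrSet => //; lia.
Qed.

Lemma primeX_cases M B : odd M -> 3 <= M -> primeX M B ->
  primePr M B \/ exists k B', 1 <= k <= M - 2 /\ B = Ik k B'.
Proof.
move=> oddM M3 BX.
have [/hasP [k] | /hasPn no_adj] := boolP (has (fun k => [fset k; k.+1] \in B) (iota 1 (M - 2))).
  rewrite mem_iota => kM /(Ik_of_adj BX.1.1) [B' ->].
  by right; exists k, B'; split=> //; lia.
by left; apply: primePr_of_no_adj => // k k0 kM; apply: no_adj; rewrite mem_iota; lia.
Qed.

Lemma not_primeX1 B : ~ primeX 1 B.
Proof.
case=> [[[Bpair _] [_ [_ [_ [_ parity]]]]] even_s].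
rewrite (negbTE even_s) in parity; case: parity => i [_ iB].
have [card2 range] := Bpair _ iB.
have /range : i \in [fset i; 1] := fset21 i 1.
by move=> i1; move: card2; rewrite (_ : i = 1) ?cardfs2 ?eqxx //; lia.
Qed.

Lemma primeX_sharpR n B : primeX (n.*2 + 3) B <-> sharpR n B.
Proof.
elim: n B => [|n IH] B.
  split=> [BX | ->]; last by apply: primePr_primeX => //; left.
  case: (primeX_cases _ _ BX) => // [[-> // | [tau [_ [tau_bd _]]]] | [k [B' [k1 eB]]]].
    by move: tau_bd; rewrite /=; lia.
  rewrite eB (_ : k = 1) in BX; last lia.
  by case: (not_primeX1 (proj1 (primeX_Ik B' (isT : 1 <= 1 <= 1)) BX)).
have EM : n.+1.*2 + 3 = (n.*2 + 3).+2 by lia.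
rewrite /= (_ : n.*2 + 5 = n.+1.*2 + 3); last lia.
split=> [BX | [Pr | [k [B' [kM [sB' ->]]]]]].
- case: (primeX_cases _ _ BX) => [| | Pr | [k [B' [kM eB]]]]; [| lia | by left | right].
    by rewrite oddD odd_double.
  exists k, B'; split=> //; split=> //; apply/IH.
  by rewrite -(primeX_Ik B' (_ : 1 <= k <= n.*2 + 3)) -?EM -?eB //; lia.
- by apply: primePr_primeX => //; [rewrite oddD odd_double | lia].
- by rewrite EM primeX_Ik; [exact/IH | lia].
Qed.

Theorem theorem4p7 (N : nat) (hN : odd N) (h3 : 3 <= N) :
  forall B : {fset {fset nat}}, primeX N B <-> sharpX N B.
Proof.
move=> B; rewrite /sharpX -primeX_sharpR.
by rewrite (_ : ((N - 3)./2).*2 + 3 = N) //; lia.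
Qed.
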